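(* Let $G=(\hat X,\hat\Sigma,\delta,\hat x_0,\hat x_m)$ be a bi-fuzzy automaton over a crisp state set with $n$ elements, with generated language $L_G$ and marked language $L_{G,m}$. Then for every string $s\in\hat\Sigma^*$ and every event $\sigma\in\hat\Sigma$, $$L_{G,m}(s\sigma)\sqsubseteq L_G(s\sigma)\sqsubseteq L_G(s).$$
   Context: $NCFD$ is the set of normal convex type-1 fuzzy sets $\mu:[0,1]\to[0,1]$ ($\max_u\mu(u)=1$, and $\mu(u_j)\ge\min\{\mu(u_i),\mu(u_k)\}$ for $u_i\le u_j\le u_k$); $a/u_0$ denotes the fuzzy set with value $a$ at $u_0$ and $0$ elsewhere. Operations: $(\mu_1\sqcup\mu_2)(v)=\sup\{\min(\mu_1(u),\mu_2(w)):\max(u,w)=v\}$, $(\mu_1\sqcap\mu_2)(v)=\sup\{\min(\mu_1(u),\mu_2(w)):\min(u,w)=v\}$; $\mu_1\sqsubseteq\mu_2$ iff $\mu_1\sqcap\mu_2=\mu_1$. For matrices $R$ ($p\times n$) and $S$ ($n\times k$) with entries in $NCFD$, $(R\odot S)(x,z)=\bigsqcup_{y}[R(x,y)\sqcap S(y,z)]$. A bi-fuzzy automaton $G=(\hat X,\hat\Sigma,\delta,\hat x_0,\hat x_m)$ over a crisp state set $X$ with $|X|=n$ consists of: bi-fuzzy states, which are row vectors of length $n$ with entries in $NCFD$; a set $\hat\Sigma$ of events, each event $\sigma$ being an $n\times n$ matrix with entries in $NCFD$; transition function $\delta(\hat x,\sigma)=\hat x\odot\sigma$; an initial bi-fuzzy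 state $\hat x_0$ and a final bi-fuzzy state $\hat x_m$ (row vectors in $NCFD^n$). Its generated and marked languages $L_G,L_{G,m}:\hat\Sigma^*\to NCFD$ are given by $L_G(\epsilon)=L_{G,m}(\epsilon)=1/1$ and, for $s=\sigma_1\cdots\sigma_k$ with $k>0$, $L_G(s)=\hat x_0\odot\sigma_1\odot\cdots\odot\sigma_k\odot A_n^T$ and $L_{G,m}(s)=\hat x_0\odot\sigma_1\odot\cdots\odot\sigma_k\odot\hat x_m^T$, where $A_n=[1/1,\dots,1/1]$ (length $n$) and $T$ is transpose. *)

(* fuzzy sets are functions R -> R over R : realType,
   only their values on [0,1] matter. *)
From HB Require Import structures.
From mathcomp Require Import all_boot all_order all_algebra.
From mathcomp Require Import all_classical all_reals.
Set Implicit Arguments. Unset Strict Implicit. Unset Printing Implicit Defensive.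
Import Order.TTheory GRing.Theory Num.Theory.
Local Open Scope ring_scope.
Local Open Scope classical_set_scope.

Section Fuzzy.
Variable R : realType.

Definition fz := R -> R.

Definition in01 (u : R) : Prop := 0 <= u /\ u <= 1.

(* a/u0 : value a at u0, 0 elsewhere *)
Definition fpoint (a u0 : R) : fz := fun u => if u == u0 then a else 0.

Definition NCFD (mu : fz) : Prop :=
  [/\ (forall u, in01 u -> 0 <= mu u /\ mu u <= 1),
      (exists u, in01 u /\ mu u = 1) &
      (forall ui uj uk, in01 ui -> in01 uj -> in01 uk -> ui <= uj -> uj <= uk ->
          Num.min (mu ui) (mu uk) <= mu uj)].

(* join and meet (extension principle with max / min) *)
Definition fjoin (m1 m2 : fz) : fz := fun v =>
  sup [set r | exists u w, [/\ in01 u, in01 w, Num.max u w = v &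
                               r = Num.min (m1 u) (m2 w)]].

Definition fmeet (m1 m2 : fz) : fz := fun v =>
  sup [set r | exists u w, [/\ in01 u, in01 w, Num.min u w = v &
                               r = Num.min (m1 u) (m2 w)]].

Definition fle (m1 m2 : fz) : Prop := forall v, in01 v -> fmeet m1 m2 v = m1 v.

Definition fvec (n : nat) := 'I_n -> fz.
Definition fevent (n : nat) := 'I_n -> 'I_n -> fz.

(* (x ⊙ sigma)(z) = ⊔_y x(y) ⊓ sigma(y,z); the empty join is 1/0,
   which is the unit of ⊔ *)
Definition vmul (n : nat) (x : fvec n) (sigma : fevent n) : fvec n :=
  fun z => \big[fjoin/fpoint 1 0]_(y < n) fmeet (x y) (sigma y z).

Definition vdot (n : nat) (x y : fvec n) : fz :=
  \big[fjoin/fpoint 1 0]_(i < n) fmeet (x i) (y i).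

Definition An (n : nat) : fvec n := fun _ => fpoint 1 1.

Definition LG (n : nat) (x0 : fvec n) (s : seq (fevent n)) : fz :=
  if s is [::] then fpoint 1 1 else vdot (foldl (@vmul n) x0 s) (@An n).

Definition LGm (n : nat) (x0 xm : fvec n) (s : seq (fevent n)) : fz :=
  if s is [::] then fpoint 1 1 else vdot (foldl (@vmul n) x0 s) xm.

End Fuzzy.

Definition all_in (T : Type) (P : T -> Prop) (s : seq T) : Prop :=
  foldr (fun x acc => P x /\ acc) True s.

From mathcomp Require Import all_boot all_order all_algebra.
From mathcomp Require Import all_classical all_reals.
From mathcomp Require Import lra.
Set Implicit Arguments. Unset Strict Implicit. Unset Printing Implicit Defensive.
Import Order.TTheory GRing.Theory Num.Theory.
Local Open Scope ring_scope.
Local Open Scope classical_set_scope.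

(* A normal convex fuzzy set mu on [0,1] with a peak p (mu p = 1) is the
   minimum of a nondecreasing "rise", equal to 1 on [p,1], and a nonincreasing
   "fall", equal to 1 on [0,p].  The suprema defining the join and the meet are
   then attained, and in these coordinates the join is (min of rises, max of
   falls) and the meet is (max of rises, min of falls).  So mu1 ⊑ mu2 follows
   from a pointwise order on shapes, for which join and meet are monotone, the
   shape of 1/0 is the least and the shape of 1/1 the greatest element.  Both
   inclusions of the theorem are then monotonicity statements: the entries of
   x_m lie below 1/1, and the entries of x ⊙ sigma lie below the join of the
   entries of x. *)

(* Innermost min/max are split first, so that the case hypotheses only
   mention atoms that lra can use. *)
Ltac no_minmax t := lazymatch t with
  | context [Order.min _ _] => fail
  | context [Order.max _ _] => fail
  | _ => idtac end.

Ltac minmax_lra := unfold in01 in *; repeat match goal with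
  | |- context [Order.min ?a ?b] => no_minmax a; no_minmax b; case: (leP a b) => ?
  | |- context [Order.max ?a ?b] => no_minmax a; no_minmax b; case: (leP a b) => ?
  end; lra.

Lemma sup_maximum (R : realType) (S : set R) (m : R) : S m -> ubound S m -> sup S = m.
Proof.
move=> Sm ubm; apply/eqP; rewrite eq_le ge_sup //=; last by exists m.
by apply: sup_upper_bound => //; split; exists m.
Qed.

Section Shapes.
Variable R : realType.
Implicit Types (f g mu : fz R) (x y u w : R).

Lemma in01_min x y : in01 x -> in01 y -> in01 (Num.min x y).
Proof. minmax_lra. Qed.

Lemma in01_max x y : in01 x -> in01 y -> in01 (Num.max x y).
Proof. minmax_lra. Qed.

Record shape := Shape { rise : R -> R; fall : R -> R; peak : R }.

Record shape_ok (a : shape) : Prop := ShapeOk {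
  rise01 : forall x, in01 x -> in01 (rise a x);
  fall01 : forall x, in01 x -> in01 (fall a x);
  rise_homo : forall x y, in01 x -> in01 y -> x <= y -> rise a x <= rise a y;
  fall_homo : forall x y, in01 x -> in01 y -> x <= y -> fall a y <= fall a x;
  peak01 : in01 (peak a);
  rise_peak : forall x, in01 x -> peak a <= x -> rise a x = 1;
  fall_peak : forall x, in01 x -> x <= peak a -> fall a x = 1 }.

Definition represents f (a : shape) : Prop :=
  shape_ok a /\ forall x, in01 x -> f x = Num.min (rise a x) (fall a x).

Lemma NCFD_represented mu : NCFD mu -> exists a, represents mu a.
Proof.
case=> mu01 [p [p01 mup]] mu_cvx.
have mu_le1 x : in01 x -> mu x <= 1 by case/mu01.
exists (Shape (fun x => if p <= x then 1 else mu x)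
              (fun x => if x <= p then 1 else mu x) p).
split; first split => /=.
- by move=> x x01; case: ifP => _; [rewrite /in01; lra | exact: mu01].
- by move=> x x01; case: ifP => _; [rewrite /in01; lra | exact: mu01].
- move=> x y x01 y01 xy; case: (leP p x) => px; case: (leP p y) => py //;
    try exact: mu_le1.
    by have := le_trans px xy; rewrite leNgt py.
  have := mu_cvx x y p x01 y01 p01 xy (ltW py); rewrite mup.
  by rewrite min_l ?mu_le1.
- move=> x y x01 y01 xy; case: (leP y p) => yp; case: (leP x p) => xp //;
    try exact: mu_le1.
    by have := le_trans xy yp; rewrite leNgt xp.
  have := mu_cvx p x y p01 x01 y01 (ltW xp) xy; rewrite mup.
  by rewrite min_r ?mu_le1.
- exact: p01.
- by move=> x _ ->.
- by move=> x _ ->.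
- move=> x x01 /=; have mux := mu_le1 x x01.
  case: (leP p x) => px; case: (leP x p) => xp; try minmax_lra.
  have -> : x = p by apply/eqP; rewrite eq_le px xp.
  by rewrite mup minxx.
Qed.

Lemma NCFD_family_represented (J : Type) (F : J -> fz R) :
  (forall j, NCFD (F j)) -> exists A : J -> shape, forall j, represents (F j) (A j).
Proof.
by move=> hF; have [A FA] := choice (fun j => NCFD_represented (hF j)); exists A.
Qed.

Section Represents.
Variables (f : fz R) (a : shape).
Hypothesis fa : represents f a.

Lemma represents_peak : f (peak a) = 1.
Proof.
case: fa => ha ef; have p01 := peak01 ha.
by rewrite ef // (rise_peak ha) // (fall_peak ha) // minxx.
Qed.

Lemma represents_rise x : in01 x -> rise a x = f (Num.min x (peak a)).
Proof.
case: fa => ha ef x01; have p01 := peak01 ha.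
rewrite ef; last exact: in01_min.
case: (leP x (peak a)) => xp.
- by rewrite (fall_peak ha) //; have := rise01 ha x01; minmax_lra.
- by rewrite (rise_peak ha x01 (ltW xp)) (rise_peak ha) // (fall_peak ha) // minxx.
Qed.

Lemma represents_fall x : in01 x -> fall a x = f (Num.max x (peak a)).
Proof.
case: fa => ha ef x01; have p01 := peak01 ha.
rewrite ef; last exact: in01_max.
case: (leP x (peak a)) => xp.
- by rewrite (fall_peak ha) // (rise_peak ha) // (fall_peak ha) // minxx.
- by rewrite (rise_peak ha x01 (ltW xp)); have := fall01 ha x01; minmax_lra.
Qed.

Lemma represents_le_rise u w : in01 u -> in01 w -> u <= w -> f u <= rise a w.
Proof.
case: fa => ha ef u01 w01 uw; rewrite ef //.
by apply: le_trans (rise_homo ha u01 w01 uw); rewrite ge_min lexx.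
Qed.

Lemma represents_le_fall u w : in01 u -> in01 w -> w <= u -> f u <= fall a w.
Proof.
case: fa => ha ef u01 w01 wu; rewrite ef //.
by apply: le_trans (fall_homo ha w01 u01 wu); rewrite ge_min lexx orbT.
Qed.

Lemma represented_NCFD : NCFD f.
Proof.
have [ha ef] := fa; split.
- move=> x x01; rewrite ef //.
  by have := rise01 ha x01; have := fall01 ha x01; minmax_lra.
- by exists (peak a); split; [exact: peak01 | exact: represents_peak].
- move=> ui uj uk i01 j01 k01 ij jk; rewrite !ef //.
  by have := rise_homo ha i01 j01 ij; have := fall_homo ha j01 k01 jk; minmax_lra.
Qed.

End Represents.

Definition shape_join (a b : shape) : shape :=
  Shape (fun x => Num.min (rise a x) (rise b x))
        (fun x => Num.max (fall a x) (fall b x))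
        (Num.max (peak a) (peak b)).

Definition shape_meet (a b : shape) : shape :=
  Shape (fun x => Num.max (rise a x) (rise b x))
        (fun x => Num.min (fall a x) (fall b x))
        (Num.min (peak a) (peak b)).

Lemma shape_join_ok a b : shape_ok a -> shape_ok b -> shape_ok (shape_join a b).
Proof.
move=> ha hb; split=> /=.
- by move=> x x01; have := rise01 ha x01; have := rise01 hb x01; minmax_lra.
- by move=> x x01; have := fall01 ha x01; have := fall01 hb x01; minmax_lra.
- move=> x y x01 y01 xy.
  by have := rise_homo ha x01 y01 xy; have := rise_homo hb x01 y01 xy; minmax_lra.
- move=> x y x01 y01 xy.
  by have := fall_homo ha x01 y01 xy; have := fall_homo hb x01 y01 xy; minmax_lra.
- exact: in01_max (peak01 ha) (peak01 hb).
- move=> x x01; rewrite ge_max => /andP[ax bx].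
  by rewrite (rise_peak ha) // (rise_peak hb) // minxx.
- move=> x x01; have := fall01 ha x01; have := fall01 hb x01.
  case: (leP (peak a) (peak b)) => ab fb01 fa01 xp.
  + by rewrite (fall_peak hb) //; minmax_lra.
  + by rewrite (fall_peak ha) //; minmax_lra.
Qed.

Lemma shape_meet_ok a b : shape_ok a -> shape_ok b -> shape_ok (shape_meet a b).
Proof.
move=> ha hb; split=> /=.
- by move=> x x01; have := rise01 ha x01; have := rise01 hb x01; minmax_lra.
- by move=> x x01; have := fall01 ha x01; have := fall01 hb x01; minmax_lra.
- move=> x y x01 y01 xy.
  by have := rise_homo ha x01 y01 xy; have := rise_homo hb x01 y01 xy; minmax_lra.
- move=> x y x01 y01 xy.
  by have := fall_homo ha x01 y01 xy; have := fall_homo hb x01 y01 xy; minmax_lra.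
- exact: in01_min (peak01 ha) (peak01 hb).
- move=> x x01; have := rise01 ha x01; have := rise01 hb x01.
  case: (leP (peak a) (peak b)) => ab rb01 ra01 px.
  + by rewrite (rise_peak ha) //; minmax_lra.
  + by rewrite (rise_peak hb) //; minmax_lra.
- move=> x x01; rewrite le_min => /andP[xa xb].
  by rewrite (fall_peak ha) // (fall_peak hb) // minxx.
Qed.

Section JoinMeet.
Variables (f g : fz R) (a b : shape).
Hypotheses (fa : represents f a) (gb : represents g b).

(* The supremum is attained at (x, min x (peak b)) or (min x (peak a), x),
   because rise b x = g (min x (peak b)); dually for the meet. *)
Lemma fjoin_value x : in01 x ->
  fjoin f g x = Num.max (Num.min (f x) (rise b x)) (Num.min (rise a x) (g x)).
Proof.
move=> x01; have pa01 := peak01 fa.1; have pb01 := peak01 gb.1.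
apply: sup_maximum.
- rewrite (represents_rise fa) // (represents_rise gb) //.
  set A := Num.min (f x) _; set B := Num.min _ (g x).
  case: (leP A B) => _.
  + exists (Num.min x (peak a)), x; split=> //; first exact: in01_min x01 pa01.
    by rewrite max_r // ge_min lexx.
  + exists x, (Num.min x (peak b)); split=> //; first exact: in01_min x01 pb01.
    by rewrite max_l // ge_min lexx.
- move=> _ [u [w [u01 w01 <- ->]]]; rewrite le_max.
  case: (lerP u w) => uw; apply/orP; [right | left]; apply: le_min2 => //.
  + exact (represents_le_rise fa u01 w01 uw).
  + exact (represents_le_rise gb w01 u01 (ltW uw)).
Qed.

Lemma fmeet_value x : in01 x ->
  fmeet f g x = Num.max (Num.min (f x) (fall b x)) (Num.min (fall a x) (g x)).
Proof.
move=> x01; have pa01 := peak01 fa.1; have pb01 := peak01 gb.1.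
apply: sup_maximum.
- rewrite (represents_fall fa) // (represents_fall gb) //.
  set A := Num.min (f x) _; set B := Num.min _ (g x).
  case: (leP A B) => _.
  + exists (Num.max x (peak a)), x; split=> //; first exact: in01_max x01 pa01.
    by rewrite min_r // le_max lexx.
  + exists x, (Num.max x (peak b)); split=> //; first exact: in01_max x01 pb01.
    by rewrite min_l // le_max lexx.
- move=> _ [u [w [u01 w01 <- ->]]]; rewrite le_max.
  case: (lerP u w) => uw; apply/orP; [left | right]; apply: le_min2 => //.
  + exact (represents_le_fall gb w01 u01 uw).
  + exact (represents_le_fall fa u01 w01 (ltW uw)).
Qed.

Lemma fjoin_represented : represents (fjoin f g) (shape_join a b).
Proof.
have [ha ef] := fa; have [hb eg] := gb.
split=> [|x x01]; first exact: shape_join_ok.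
by rewrite fjoin_value // ef // eg //= min_maxr minAC minA.
Qed.

Lemma fmeet_represented : represents (fmeet f g) (shape_meet a b).
Proof.
have [ha ef] := fa; have [hb eg] := gb.
split=> [|x x01]; first exact: shape_meet_ok.
by rewrite fmeet_value // ef // eg //= min_maxl -minA (minCA (fall a x)).
Qed.

End JoinMeet.

Lemma NCFD_fjoin f g : NCFD f -> NCFD g -> NCFD (fjoin f g).
Proof.
move=> /NCFD_represented[a fa] /NCFD_represented[b gb].
exact: represented_NCFD (fjoin_represented fa gb).
Qed.

Lemma NCFD_fmeet f g : NCFD f -> NCFD g -> NCFD (fmeet f g).
Proof.
move=> /NCFD_represented[a fa] /NCFD_represented[b gb].
exact: represented_NCFD (fmeet_represented fa gb).
Qed.

Definition shape_bot : shape := Shape (fun=> 1) (fun x => if x <= 0 then 1 else 0) 0.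

Definition shape_top : shape := Shape (fun x => if 1 <= x then 1 else 0) (fun=> 1) 1.

Lemma fpoint10_represented : represents (fpoint 1 0) shape_bot.
Proof.
split; first split=> /=.
- by move=> *; rewrite /in01; lra.
- by move=> x _; case: ifP => _; rewrite /in01; lra.
- by move=> *; exact: lexx.
- move=> x y _ _ xy; case: (lerP y 0) => y0; first by rewrite (le_trans xy y0).
  by case: ifP => _; lra.
- by rewrite /in01; lra.
- by [].
- by move=> x _ ->.
- move=> x [x0 _] /=; rewrite /fpoint eq_le x0 andbT.
  by case: (lerP x 0) => _; minmax_lra.
Qed.

Lemma fpoint11_represented : represents (fpoint 1 1) shape_top.
Proof.
split; first split=> /=.
- by move=> x _; case: ifP => _; rewrite /in01; lra.
- by move=> *; rewrite /in01; lra.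
- move=> x y _ _ xy; case: (lerP 1 x) => x1; first by rewrite (le_trans x1 xy).
  by case: ifP => _; lra.
- by move=> *; exact: lexx.
- by rewrite /in01; lra.
- by move=> x _ ->.
- by [].
- move=> x [_ x1] /=; rewrite /fpoint eq_le x1 /=.
  by case: (lerP 1 x) => _; minmax_lra.
Qed.

Lemma NCFD_fpoint10 : NCFD (@fpoint R 1 0).
Proof. exact: represented_NCFD fpoint10_represented. Qed.

Definition shape_le (a b : shape) : Prop :=
  forall x, in01 x -> rise b x <= rise a x /\ fall a x <= fall b x.

Lemma fle_represented f g a b :
  represents f a -> represents g b -> shape_le a b -> fle f g.
Proof.
move=> fa gb ab x x01; have [ba ab'] := ab x x01.
by rewrite (fmeet_represented fa gb).2 //= (max_l ba) (min_l ab') fa.2.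
Qed.

Lemma shape_le_refl a : shape_le a a.
Proof. by move=> x _; split. Qed.

Lemma shape_le_trans a b c : shape_le a b -> shape_le b c -> shape_le a c.
Proof.
move=> ab bc x x01; have [? ?] := ab x x01; have [? ?] := bc x x01.
by split; apply: le_trans; eassumption.
Qed.

Lemma shape_leIl a b : shape_le (shape_meet a b) a.
Proof. by move=> x _; rewrite /= le_max ge_min !lexx. Qed.

Lemma shape_leI2 a b c d :
  shape_le a c -> shape_le b d -> shape_le (shape_meet a b) (shape_meet c d).
Proof.
move=> ac bd x x01; have [? ?] := ac x x01; have [? ?] := bd x x01.
by split; [apply: le_max2 | apply: le_min2].
Qed.

Lemma shape_leU2 a b c d :
  shape_le a c -> shape_le b d -> shape_le (shape_join a b) (shape_join c d).
Proof.
move=> ac bd x x01; have [? ?] := ac x x01; have [? ?] := bd x x01.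
by split; [apply: le_min2 | apply: le_max2].
Qed.

Lemma shape_leUx a b c : shape_le a c -> shape_le b c -> shape_le (shape_join a b) c.
Proof.
move=> ac bc x x01; have [? ?] := ac x x01; have [? ?] := bc x x01.
by rewrite /= le_min ge_max; split; apply/andP.
Qed.

Lemma shape_le0x a : shape_ok a -> shape_le shape_bot a.
Proof.
move=> ha x x01; have [? ?] := rise01 ha x01; have [? ?] := fall01 ha x01.
split=> //=; case: (lerP x 0) => x0 //.
by rewrite (fall_peak ha) // (le_trans x0); case: (peak01 ha).
Qed.

Lemma shape_lex1 a : shape_ok a -> shape_le a shape_top.
Proof.
move=> ha x x01; have [? ?] := rise01 ha x01; have [? ?] := fall01 ha x01.
split=> //=; case: (lerP 1 x) => x1 //.
by rewrite (rise_peak ha) // (le_trans _ x1); case: (peak01 ha).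
Qed.

Section BigJoin.
Variables (I : Type) (r : seq I) (P : pred I).

Lemma big_fjoin_represented (F : I -> fz R) (A : I -> shape) :
  (forall i, represents (F i) (A i)) ->
  represents (\big[@fjoin R/fpoint 1 0]_(i <- r | P i) F i)
             (\big[shape_join/shape_bot]_(i <- r | P i) A i).
Proof.
move=> FA; apply: big_ind2 => [|f1 a1 f2 a2|i _].
- exact: fpoint10_represented.
- exact: fjoin_represented.
- exact: FA.
Qed.

Lemma big_shape_leU2 (A B : I -> shape) : (forall i, shape_le (A i) (B i)) ->
  shape_le (\big[shape_join/shape_bot]_(i <- r | P i) A i)
           (\big[shape_join/shape_bot]_(i <- r | P i) B i).
Proof.
move=> AB; apply: big_ind2 => [|a1 b1 a2 b2|i _].
- exact: shape_le_refl.
- exact: shape_leU2.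
- exact: AB.
Qed.

Lemma big_shape_leUx (A : I -> shape) c : shape_ok c -> (forall i, shape_le (A i) c) ->
  shape_le (\big[shape_join/shape_bot]_(i <- r | P i) A i) c.
Proof.
move=> hc Ac; apply: (big_ind (shape_le^~ c)) => [|a b|i _].
- exact: shape_le0x.
- exact: shape_leUx.
- exact: Ac.
Qed.

End BigJoin.

Section Vectors.
Variable n : nat.
Implicit Types (sigma : fevent R n) (X Y : 'I_n -> shape).

Definition shape_vdot X Y : shape :=
  \big[shape_join/shape_bot]_(i < n) shape_meet (X i) (Y i).

Definition shape_vmul X (S : 'I_n -> 'I_n -> shape) (z : 'I_n) : shape :=
  shape_vdot X (S^~ z).

Lemma vdot_represented (x y : fvec R n) X Y : (forall i, represents (x i) (X i)) ->
  (forall i, represents (y i) (Y i)) -> represents (vdot x y) (shape_vdot X Y).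
Proof.
by move=> xX yY; apply: big_fjoin_represented => i; exact: fmeet_represented.
Qed.

Lemma vmul_represented (x : fvec R n) sigma X S : (forall i, represents (x i) (X i)) ->
  (forall i j, represents (sigma i j) (S i j)) ->
  forall z, represents (vmul x sigma z) (shape_vmul X S z).
Proof. by move=> xX sS z; apply: vdot_represented. Qed.

Lemma NCFD_vmul (x : fvec R n) sigma :
  (forall i, NCFD (x i)) -> (forall i j, NCFD (sigma i j)) ->
  forall z, NCFD (vmul x sigma z).
Proof.
move=> hx hs z; apply: (big_ind (@NCFD R)) => [|f g|i _].
- exact: NCFD_fpoint10.
- exact: NCFD_fjoin.
- exact: NCFD_fmeet.
Qed.

Lemma NCFD_foldl_vmul (Sigma : set (fevent R n)) (x : fvec R n) s :
  (forall sigma, Sigma sigma -> forall i j, NCFD (sigma i j)) ->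
  (forall i, NCFD (x i)) -> all_in Sigma s -> forall i, NCFD (foldl (@vmul R n) x s i).
Proof.
move=> hSigma; elim: s x => [|sigma s IHs] x hx //= [Ssigma Ss].
by apply: IHs => //; apply: NCFD_vmul => //; exact: hSigma.
Qed.

Lemma shape_vdot_ok X Y : (forall i, shape_ok (X i)) -> (forall i, shape_ok (Y i)) ->
  shape_ok (shape_vdot X Y).
Proof.
move=> hX hY; apply: (big_ind shape_ok) => [|a b|i _].
- exact: fpoint10_represented.1.
- exact: shape_join_ok.
- exact: shape_meet_ok.
Qed.

Lemma shape_vdot_le2 X Y Y' : (forall i, shape_le (Y i) (Y' i)) ->
  shape_le (shape_vdot X Y) (shape_vdot X Y').
Proof.
by move=> YY'; apply: big_shape_leU2 => i; apply: shape_leI2 => //; exact: shape_le_refl.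
Qed.

Lemma shape_vdot_vmul_top X S :
  (forall i, shape_ok (X i)) -> (forall i j, shape_ok (S i j)) ->
  shape_le (shape_vdot (shape_vmul X S) (fun=> shape_top))
           (shape_vdot X (fun=> shape_top)).
Proof.
move=> hX hS; apply: big_shape_leUx => [|z].
  exact: shape_vdot_ok hX (fun=> fpoint11_represented.1).
apply: shape_le_trans (shape_leIl _ _) _.
by apply: shape_vdot_le2 => j; exact: shape_lex1 (hS j z).
Qed.

End Vectors.

Lemma LG_rcons n (x0 : fvec R n) s sigma :
  LG x0 (rcons s sigma) = vdot (vmul (foldl (@vmul R n) x0 s) sigma) (@An R n).
Proof. by rewrite /LG -foldl_rcons; case: s. Qed.

Lemma LGm_rcons n (x0 xm : fvec R n) s sigma :
  LGm x0 xm (rcons s sigma) = vdot (vmul (foldl (@vmul R n) x0 s) sigma) xm.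
Proof. by rewrite /LGm -foldl_rcons; case: s. Qed.

Lemma fle_top f a : represents f a -> fle f (fpoint 1 1).
Proof.
by move=> fa; apply: (fle_represented fa fpoint11_represented); exact: shape_lex1 fa.1.
Qed.

End Shapes.

Theorem proposition2 (R : realType) (n : nat) (Sigma : set (fevent R n))
    (x0 xm : fvec R n)
    (HSigma : forall sigma, Sigma sigma -> forall i j, NCFD (sigma i j))
    (Hx0 : forall i, NCFD (x0 i)) (Hxm : forall i, NCFD (xm i))
    (s : seq (fevent R n)) (sigma : fevent R n)
    (Hs : all_in Sigma s) (Hsigma : Sigma sigma) :
  fle (LGm x0 xm (rcons s sigma)) (LG x0 (rcons s sigma)) /\
  fle (LG x0 (rcons s sigma)) (LG x0 s).
Proof.
have [Y HY] := NCFD_family_represented (NCFD_foldl_vmul HSigma Hx0 Hs).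
have [Xm HXm] := NCFD_family_represented Hxm.
have [S HS] := NCFD_family_represented
  (fun ij : 'I_n * 'I_n => HSigma _ Hsigma ij.1 ij.2).
have HW := vmul_represented HY (fun i j => HS (i, j)).
have Htop (i : 'I_n) : represents (@An R n i) (shape_top R) := fpoint11_represented R.
rewrite LG_rcons LGm_rcons; split.
  apply: fle_represented (vdot_represented HW HXm) (vdot_represented HW Htop) _.
  by apply: shape_vdot_le2 => i; exact: shape_lex1 (HXm i).1.
case: s {Hs} HY HW => [|sigma0 s] HY HW.
  exact: fle_top (vdot_represented HW Htop).
apply: fle_represented (vdot_represented HW Htop) (vdot_represented HY Htop) _.
by apply: shape_vdot_vmul_top => [i|i j]; [exact: (HY i).1 | exact: (HS (i, j)).1].
Qed.
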